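(* For every $k\in\mathbb{N}$ and every $\alpha\in(0,1)$ there exists $\gamma_0>0$ such that for all $0<\gamma\leq\gamma_0$ the following holds. Let $G$ be a digraph on $n$ vertices and let $G_1,\dots,G_k$ be pairwise edge-disjoint subgraphs of $G$ with $\sum_{i\in[k]}e(G_i)\leq\gamma n^2$ and $\Delta^0(G_i)\leq\alpha n$ for each $i\in[k]$. Then each $G_i$ contains a path system $\mathcal{Q}_i$ such that $\bigcup_{i\in[k]}\mathcal{Q}_i$ contains no directed cycle and $e(\mathcal{Q}_i)\geq\lfloor e(G_i)/(\alpha n)\rfloor$ for all $i\in[k]$.
   Context: A path system in a digraph is a set of vertex-disjoint directed paths, identified with the subgraph formed by their vertices and edges; $e(\mathcal{Q})$ is its number of edges. $\Delta^0(H)$ is the maximum over vertices of the maximum of in- and outdegree in $H$. (The paper states the hypothesis as ''$0<\gamma\ll\alpha<1$'' with $k$ fixed beforehand, i.e. $\gamma$ sufficiently small in terms of $\alpha$ and $k$.) *)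

From HB Require Import structures.
From mathcomp Require Import all_boot all_order all_algebra.
Set Implicit Arguments. Unset Strict Implicit. Unset Printing Implicit Defensive.
Import Order.TTheory GRing.Theory Num.Theory.

(* A digraph on a finite vertex type V is given by its edge set
   E : {set V * V}; (x, y) \in E is the directed edge x -> y. *)

Section Digraphs.
Variable V : finType.

Definition loopless (E : {set V * V}) : Prop := forall v : V, (v, v) \notin E.

Definition outdeg (E : {set V * V}) (v : V) : nat := #|[set y | (v, y) \in E]|.
Definition indeg (E : {set V * V}) (v : V) : nat := #|[set x | (x, v) \in E]|.

Definition maxsemideg_le {R : numDomainType} (E : {set V * V}) (d : R) : Prop :=
  forall v : V, ((outdeg E v)%:R <= d)%R /\ ((indeg E v)%:R <= d)%R.

Definition dpath (E : {set V * V}) (p : seq V) : bool :=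
  if p is x :: s then uniq p && path (fun a b => (a, b) \in E) x s else false.

Definition path_edges (p : seq V) : {set V * V} :=
  [set e | e \in zip p (behead p)].

(* a path system in E: a family of pairwise vertex-disjoint directed paths
   (uniq of the concatenation = distinct vertices within and across paths) *)
Definition path_system (E : {set V * V}) (P : seq (seq V)) : bool :=
  all (dpath E) P && uniq (flatten P).

(* the edge set of a path system (its subgraph); e(Q) = #|ps_edges P| *)
Definition ps_edges (P : seq (seq V)) : {set V * V} :=
  \bigcup_(p <- P) path_edges p.

Definition has_dcycle (E : {set V * V}) : Prop :=
  exists c : seq V, [&& 0 < size c, uniq c & cycle (fun x y => (x, y) \in E) c].

End Digraphs.

From HB Require Import structures.
From mathcomp Require Import all_boot all_order all_algebra.
From mathcomp Require Import reals.
From mathcomp Require Import zify ring lra.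
Import Order.TTheory GRing.Theory Num.Theory.

Set Implicit Arguments. Unset Strict Implicit. Unset Printing Implicit Defensive.

(* Let d = floor(alpha n), l = floor(d / 4(k+1)) and m_i = floor(e(G_i) / d).  We grow sets
   F_i of edges of G_i with in- and outdegrees at most 1, one edge at a time, and every edge we
   add has an endpoint that no F_j touches yet; such an edge cannot close a directed cycle, so
   the union of the F_i stays acyclic, and in the end each F_i splits into a path system.
   Call a vertex high for G_i if its out- or indegree in G_i exceeds l.  There are
   h_i <= 2 e(G_i) / (l+1) high vertices, and the edges of G_i with neither a high tail nor a
   high head (the low edges) number at least r_i d, where r_i = m_i - h_i.  First, taking the
   classes in increasing order of r_i, we give F_i r_i low edges with both endpoints untouched:
   fewer than 2k r_i vertices are touched and each lies on at most 2l low edges, while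
   d >= 4(k+1) l, so some low edge is always available.  Then every vertex of high outdegree in G_i gets an out-edge to an untouched
   vertex and every vertex of high indegree an in-edge from an untouched vertex; as the G_i are
   sparse, fewer than l vertices are ever touched, so such neighbours exist.  Hence
   e(F_i) >= r_i + h_i >= m_i. *)

Lemma disjoint_setU1 (T : finType) (x : T) (A : {set T}) (B : {pred T}) :
  [disjoint x |: A & B] = (x \notin B) && [disjoint A & B].
Proof. by rewrite -disjoint1 -disjointU; apply: eq_disjoint => y; rewrite !inE. Qed.

Section Digraphs.
Variable V : finType.
Implicit Types (E F : {set V * V}) (S : {set V}).

Definition tails E : {set V} := [set e.1 | e in E].
Definition heads E : {set V} := [set e.2 | e in E].
Definition endpoints E : {set V} := tails E :|: heads E.

Definition deg_le1 E : Prop := forall v, outdeg E v <= 1 /\ indeg E v <= 1.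

Lemma mem_tails E x y : (x, y) \in E -> x \in tails E.
Proof. by move=> h; apply/imsetP; exists (x, y). Qed.

Lemma mem_heads E x y : (x, y) \in E -> y \in heads E.
Proof. by move=> h; apply/imsetP; exists (x, y). Qed.

Lemma notin_endpoints E v e : v \notin endpoints E -> e \in E -> (e.1 != v) && (e.2 != v).
Proof.
move=> hv he; rewrite !inE negb_or in hv; case/andP: hv => h1 h2.
by apply/andP; split; [move: h1 | move: h2]; apply: contraNneq => <-; apply/imsetP; exists e.
Qed.

Lemma tails_setU1 E a b : tails ((a, b) |: E) = a |: tails E.
Proof. by rewrite /tails imsetU1. Qed.

Lemma heads_setU1 E a b : heads ((a, b) |: E) = b |: heads E.
Proof. by rewrite /heads imsetU1. Qed.

Lemma endpointsS E F : E \subset F -> endpoints E \subset endpoints F.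
Proof. by move=> sEF; apply: setUSS; apply: imsetS. Qed.

Lemma card_endpoints E : #|endpoints E| <= 2 * #|E|.
Proof.
rewrite mul2n -addnn; apply: leq_trans (leq_card_setU _ _).1 _.
by apply: leq_add; apply: leq_imset_card.
Qed.

Lemma outdegS E F v : E \subset F -> outdeg E v <= outdeg F v.
Proof. by move=> sEF; apply/subset_leq_card/subsetP=> y; rewrite !inE => /(subsetP sEF). Qed.

Lemma indegS E F v : E \subset F -> indeg E v <= indeg F v.
Proof. by move=> sEF; apply/subset_leq_card/subsetP=> x; rewrite !inE => /(subsetP sEF). Qed.

Lemma outdeg_le1_eq E x y y' : outdeg E x <= 1 -> (x, y) \in E -> (x, y') \in E -> y = y'.
Proof. by move=> /card_le1_eqP h h1 h2; apply: h; rewrite inE. Qed.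

Lemma indeg_le1_eq E x x' y : indeg E y <= 1 -> (x, y) \in E -> (x', y) \in E -> x = x'.
Proof. by move=> /card_le1_eqP h h1 h2; apply: h; rewrite inE. Qed.

Lemma deg_le1S E F : E \subset F -> deg_le1 F -> deg_le1 E.
Proof.
move=> sEF dF v; have [o i] := dF v.
by split; [apply: leq_trans (outdegS v sEF) o | apply: leq_trans (indegS v sEF) i].
Qed.

Lemma deg_le1_setU1 E a b : deg_le1 E -> a \notin tails E -> b \notin heads E ->
  deg_le1 ((a, b) |: E).
Proof.
move=> dE ha hb v; have [o i] := dE v; split.
  have [->|va] := eqVneq v a.
    have nE y : (a, y) \notin E by apply: contra ha => /mem_tails.
    apply/card_le1_eqP => y y'; rewrite !inE !xpair_eqE eqxx /= !(negbTE (nE _)) !orbF.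
    by move=> /eqP-> /eqP->.
  apply: leq_trans o; apply/subset_leq_card/subsetP => y.
  by rewrite !inE xpair_eqE (negbTE va).
have [->|vb] := eqVneq v b.
  have nE x : (x, b) \notin E by apply: contra hb => /mem_heads.
  apply/card_le1_eqP => x x'; rewrite !inE !xpair_eqE eqxx !andbT !(negbTE (nE _)) !orbF.
  by move=> /eqP-> /eqP->.
apply: leq_trans i; apply/subset_leq_card/subsetP => x.
by rewrite !inE xpair_eqE (negbTE vb) andbF.
Qed.

Lemma card_out_edges E S : #|[set e in E | e.1 \in S]| = \sum_(v in S) outdeg E v.
Proof.
rewrite -sum1_card (partition_big (fun e : V * V => e.1) (mem S)) /=; last first.
  by move=> e; rewrite inE => /andP [].
apply: eq_bigr => v vS; rewrite sum1_card /outdeg.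
rewrite -[RHS](card_imset _ (fun y y' (h : (v, y) = (v, y')) => congr1 snd h)).
apply: eq_card => -[x y]; rewrite [in LHS]unfold_in !inE /=.
apply/idP/imsetP => [/andP [/andP [xyE _] /eqP xv] | [z]]; first by exists y; rewrite ?inE -?xv.
by rewrite inE => vz [-> ->]; rewrite vz vS eqxx.
Qed.

Lemma card_in_edges E S : #|[set e in E | e.2 \in S]| = \sum_(v in S) indeg E v.
Proof.
rewrite -sum1_card (partition_big (fun e : V * V => e.2) (mem S)) /=; last first.
  by move=> e; rewrite inE => /andP [].
apply: eq_bigr => v vS; rewrite sum1_card /indeg.
rewrite -[RHS](card_imset _ (fun x x' (h : (x, v) = (x', v)) => congr1 fst h)).
apply: eq_card => -[x y]; rewrite [in LHS]unfold_in !inE /=.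
apply/idP/imsetP => [/andP [/andP [xyE _] /eqP yv] | [z]]; first by exists x; rewrite ?inE -?yv.
by rewrite inE => zv [-> ->]; rewrite zv vS eqxx.
Qed.

Lemma card_le_outdeg E d : (forall v, outdeg E v <= d) -> #|E| <= #|V| * d.
Proof.
move=> dE; rewrite -cardsT -sum_nat_const (_ : E = [set e in E | e.1 \in setT]).
  by rewrite card_out_edges; apply: leq_sum => v _.
by apply/setP => e; rewrite !inE andbT.
Qed.

Lemma fresh_out_neighbour E S x : #|S| < outdeg E x -> exists2 y, (x, y) \in E & y \notin S.
Proof.
move=> hS; have /subsetPn [y] : ~~ ([set y | (x, y) \in E] \subset S).
  by apply: contraTN hS => /subset_leq_card; rewrite -leqNgt.
by rewrite inE; exists y.
Qed.

Lemma fresh_in_neighbour E S y : #|S| < indeg E y -> exists2 x, (x, y) \in E & x \notin S.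
Proof.
move=> hS; have /subsetPn [x] : ~~ ([set x | (x, y) \in E] \subset S).
  by apply: contraTN hS => /subset_leq_card; rewrite -leqNgt.
by rewrite inE; exists x.
Qed.

Lemma has_dcycleS E F : E \subset F -> has_dcycle E -> has_dcycle F.
Proof.
move=> sEF [c /and3P [c0 uc cc]]; exists c; rewrite c0 uc /=.
by apply: sub_cycle cc => x y; apply: (subsetP sEF).
Qed.

Lemma acyclic_setU1_sink E a b : ~ has_dcycle E -> a != b -> b \notin endpoints E ->
  ~ has_dcycle ((a, b) |: E).
Proof.
move=> acE ab hb [c /and3P [c0 uc cc]].
have [bc | bNc] := boolP (b \in c).
  move: (next_cycle cc bc); rewrite /= !inE => /orP [/eqP [eba _] | /(notin_endpoints hb)].
    by move: ab; rewrite eba eqxx.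
  by rewrite eqxx.
apply: acE; exists c; rewrite c0 uc /=.
apply: (sub_in_cycle _ (allss c) cc) => x y _ yc /=; rewrite !inE xpair_eqE.
by case/orP => // /andP [_ /eqP yb]; move: yc; rewrite yb (negbTE bNc).
Qed.

Lemma acyclic_setU1_source E a b : ~ has_dcycle E -> a != b -> a \notin endpoints E ->
  ~ has_dcycle ((a, b) |: E).
Proof.
move=> acE ab ha [c /and3P [c0 uc cc]].
have [ac | aNc] := boolP (a \in c).
  move: (prev_cycle cc ac); rewrite /= !inE => /orP [/eqP [_ eab] | /(notin_endpoints ha)].
    by move: ab; rewrite eab eqxx.
  by rewrite eqxx andbF.
apply: acE; exists c; rewrite c0 uc /=.
apply: (sub_in_cycle _ (allss c) cc) => x y xc _ /=; rewrite !inE xpair_eqE.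
by case/orP => // /andP [/eqP xa _]; move: xc; rewrite xa (negbTE aNc).
Qed.

Lemma has_dcycle_pred E S (f : V -> V) x : x \in S -> {homo f : v / v \in S} ->
  {in S &, injective f} -> {in S, forall v, (f v, v) \in E} -> has_dcycle E.
Proof.
move=> xS fS finj fE; exists (rev (orbit f x)).
have orbS : all (mem S) (orbit f x).
  by apply/allP => _ /trajectP [i _ ->]; elim: i => //= i; apply: fS.
rewrite size_rev size_orbit order_gt0 rev_uniq orbit_uniq rev_cycle /=.
apply: (sub_in_cycle _ orbS (cycle_orbit_in fS finj xS)) => u v uS _ /= /eqP <-.
exact: fE.
Qed.

Lemma exists_source E : E != set0 -> (forall v, outdeg E v <= 1) -> ~ has_dcycle E ->
  exists2 e, e \in E & e.1 \notin heads E.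
Proof.
move=> /set0Pn [[x0 y0] e0E] oE acE; apply/exists_inP; apply: contraT; rewrite negb_exists_in.
move=> /forall_inP noSource; exfalso; apply: acE.
pose f v := odflt v [pick u | (u, v) \in E].
have fE : {in heads E, forall v, (f v, v) \in E}.
  move=> _ /imsetP [[u v] uvE ->] /=; rewrite /f; case: pickP => [//|].
  by move=> /(_ u); rewrite uvE.
apply: (has_dcycle_pred (mem_heads e0E) _ _ fE).
  by move=> v /fE /noSource; rewrite negbK.
by move=> u v /fE uE /fE vE fuv; rewrite fuv in uE; apply: outdeg_le1_eq (oE _) uE vE.
Qed.

End Digraphs.

Section PathCovers.
Variable V : finType.
Implicit Types (E F : {set V * V}) (p : seq V) (P : seq (seq V)).

Definition path_cover E P : Prop :=
  [/\ path_system E P, ps_edges P = E & all (fun p => 1 < size p) P].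

Lemma ps_edges_cons p P : ps_edges (p :: P) = path_edges p :|: ps_edges P.
Proof. by rewrite /ps_edges big_cons. Qed.

Lemma path_edges_cons2 x y p : path_edges [:: x, y & p] = (x, y) |: path_edges (y :: p).
Proof. by apply/setP => e; rewrite !inE. Qed.

Lemma path_edges_sub p P : p \in P -> path_edges p \subset ps_edges P.
Proof. by move=> pP; rewrite /ps_edges (perm_big _ (perm_to_rem pP)) big_cons subsetUl. Qed.

Lemma dpathS E F p : E \subset F -> dpath E p -> dpath F p.
Proof.
case: p => [//|x p] sEF /= /andP [-> xp] /=.
by apply: sub_path xp => a b; apply: (subsetP sEF).
Qed.

Lemma path_systemS E F P : E \subset F -> path_system E P -> path_system F P.
Proof.
by move=> sEF /andP [dP uP]; rewrite /path_system uP andbT; apply: sub_all dP => p; apply: dpathS.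
Qed.

Lemma mem_zip_behead (a x : V) p : x \in p -> exists w, (w, x) \in zip (a :: p) p.
Proof.
elim: p a => [//|b p IHp] a; rewrite inE => /predU1P [-> | xp].
  by exists a; rewrite /= inE eqxx.
by have [w wx] := IHp b xp; exists w; rewrite /= inE wx orbT.
Qed.

Section Cover.
Variables (E : {set V * V}) (P : seq (seq V)).
Hypothesis coverP : path_cover E P.

Lemma cover_edge p e : p \in P -> e \in zip p (behead p) -> e \in E.
Proof.
case: coverP => _ <- _ pP pe; apply: (subsetP (path_edges_sub pP)).
by rewrite inE.
Qed.

Lemma cover_head p v : p \in P -> v \in p -> v \notin heads E -> p = v :: behead p.
Proof.
case: p => [//|a p] pP; rewrite inE => /predU1P [-> //| vp].
have [w wv] := mem_zip_behead a vp.
by rewrite (mem_heads (cover_edge pP wv)).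
Qed.

Lemma cover_endpoints v : v \in flatten P -> v \in endpoints E.
Proof.
case: coverP => _ _ /allP sP /flattenP [p pP vp].
have [vH | /(cover_head pP vp) pv] := boolP (v \in heads E); first by rewrite inE vH orbT.
move: (sP p pP); rewrite pv; case: (behead p) pv => [//|w s] pv _.
by rewrite inE (mem_tails (cover_edge pP (_ : (v, w) \in _))) // pv /= inE eqxx.
Qed.

End Cover.

Lemma path_cover_add_source E P x y : path_cover E P ->
  x \notin endpoints E -> y \notin heads E -> x != y ->
  exists P', path_cover ((x, y) |: E) P'.
Proof.
move=> cP xE yH xy; have [/andP [dP uP] eP sP] := cP.
have xP : x \notin flatten P by apply: contra xE; apply: cover_endpoints.
have sE : E \subset (x, y) |: E by apply: subsetUr.
have [/flattenP [p pP yp] | yP] := boolP (y \in flatten P).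
  have pe := perm_to_rem pP; have pf := perm_flatten pe.
  have py := cover_head cP pP yp yH.
  exists ((x :: p) :: rem p P); split.
  - have xp : x \notin p by apply: contra xP => xp; apply/flattenP; exists p.
    have dxp : dpath ((x, y) |: E) (x :: p).
      have /andP [up yp'] : dpath E (y :: behead p) by rewrite -py; apply: (allP dP).
      rewrite -py in up; rewrite /= xp up py /= !inE eqxx /=.
      by apply: sub_path yp' => a b; apply: (subsetP sE).
    have dR : all (dpath ((x, y) |: E)) (rem p P).
      by apply/allP => q /mem_rem /(allP dP); apply: dpathS.
    apply/andP; split; first exact/andP.
    change (uniq (x :: flatten (p :: rem p P))).
    by rewrite cons_uniq -(perm_uniq pf) -(perm_mem pf) xP uP.
  - rewrite ps_edges_cons py path_edges_cons2 -setUA -py -ps_edges_cons.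
    by rewrite /ps_edges -(perm_big _ pe) -/(ps_edges P) eP.
  - by rewrite /= andbC; apply/andP; split; [apply/allP => q /mem_rem /(allP sP) | rewrite py].
exists ([:: x; y] :: P); split.
- rewrite /path_system /= !inE negb_or xy eqxx yP uP !andbT /=.
  by rewrite xP andbT; apply: sub_all dP => p; apply: dpathS.
- by rewrite ps_edges_cons eP; congr (_ :|: _); apply/setP => e; rewrite !inE.
- by rewrite /= sP.
Qed.

Lemma linear_forest_path_cover E : deg_le1 E -> ~ has_dcycle E -> exists P, path_cover E P.
Proof.
elim: {E}_.+1 {-2}E (ltnSn #|E|) => // N IHN E; rewrite ltnS => cE dE acE.
have [-> | E0] := eqVneq E set0.
  by exists [::]; split => //; rewrite /ps_edges big_nil.
have [[x y] xyE /= xH] := exists_source E0 (fun v => (dE v).1) acE.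
pose E' := E :\ (x, y).
have sE' : E' \subset E by apply: subsetDl.
have cE' : #|E'| < N by apply: leq_trans cE; rewrite [#|E|](cardsD1 (x, y)) xyE.
have acE' : ~ has_dcycle E' by move=> /(has_dcycleS sE').
have [P cP] := IHN E' cE' (deg_le1S sE' dE) acE'.
have xE' : x \notin endpoints E'.
  rewrite inE negb_or; apply/andP; split; last by apply: contra xH; apply/subsetP/imsetS.
  apply/imsetP => -[[u z] uzE' /= xu]; subst u.
  have yz := outdeg_le1_eq (dE x).1 xyE (subsetP sE' _ uzE').
  by move: uzE'; rewrite -yz !inE eqxx.
have yE' : y \notin heads E'.
  apply/imsetP => -[[w z] wzE' /= yz]; subst z.
  have xw := indeg_le1_eq (dE y).2 xyE (subsetP sE' _ wzE').
  by move: wzE'; rewrite -xw !inE eqxx.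
have xy : x != y by apply: contraNneq xH => ->; apply: mem_heads xyE.
have [P' cP'] := path_cover_add_source cP xE' yE' xy.
by exists P'; rewrite /E' setD1K in cP'.
Qed.

End PathCovers.

Section Greedy.
Variables (V : finType) (k : nat) (G : 'I_k -> {set V * V}).
Hypothesis G_loopless : forall i, loopless (G i).
Implicit Types (F : {set 'I_k * (V * V)}) (i j : 'I_k).

(* The family (F_i)_i is encoded as the set of tagged edges (i, e) with e in F_i. *)
Definition layer F i : {set V * V} := [set e | (i, e) \in F].
Definition edges_of F : {set V * V} := [set p.2 | p in F].

Definition linear_forests F : Prop :=
  [/\ forall i, layer F i \subset G i, forall i, deg_le1 (layer F i) & ~ has_dcycle (edges_of F)].

Definition grows_by i n F F' : Prop :=
  [/\ F \subset F', #|F'| = #|F| + n, #|layer F' i| = #|layer F i| + n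
    & forall j, j != i -> layer F' j = layer F j].

Lemma layerS F F' i : F \subset F' -> layer F i \subset layer F' i.
Proof. by move=> sFF'; apply/subsetP => e; rewrite !inE => /(subsetP sFF'). Qed.

Lemma layer_setU1 F i e : layer ((i, e) |: F) i = e |: layer F i.
Proof. by apply/setP => e'; rewrite !inE xpair_eqE eqxx. Qed.

Lemma layer_setU1_neq F i j e : j != i -> layer ((i, e) |: F) j = layer F j.
Proof. by move=> ji; apply/setP => e'; rewrite !inE xpair_eqE (negbTE ji). Qed.

Lemma layer_sub_edges F i : layer F i \subset edges_of F.
Proof. by apply/subsetP => e; rewrite inE => iF; apply/imsetP; exists (i, e). Qed.

Lemma bigcup_layer F : \bigcup_i layer F i = edges_of F.
Proof.
apply/eqP; rewrite eqEsubset; apply/andP; split.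
  by apply/bigcupsP => i _; apply: layer_sub_edges.
by apply/subsetP => _ /imsetP [[i e] ieF ->]; apply/bigcupP; exists i; rewrite ?inE.
Qed.

Lemma fresh_notin_layer F i v : v \notin endpoints (edges_of F) ->
  v \notin tails (layer F i) /\ v \notin heads (layer F i).
Proof.
move=> vF; have /subsetP sE := endpointsS (layer_sub_edges F i).
by split; apply: contra vF => vC; apply: sE; rewrite inE vC ?orbT.
Qed.

Lemma card_endpoints_edges_of F : #|endpoints (edges_of F)| <= 2 * #|F|.
Proof. by apply: leq_trans (card_endpoints _) _; rewrite leq_mul2l leq_imset_card orbT. Qed.

Lemma grows_by0 i F : grows_by i 0 F F.
Proof. by split; rewrite ?addn0. Qed.

Lemma grows_by_trans i m n F1 F2 F3 :
  grows_by i m F1 F2 -> grows_by i n F2 F3 -> grows_by i (m + n) F1 F3.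
Proof.
move=> [s12 c12 d12 o12] [s23 c23 d23 o23]; split.
- exact: subset_trans s23.
- by rewrite c23 c12 addnA.
- by rewrite d23 d12 addnA.
- by move=> j ji; rewrite o23 // o12.
Qed.

Lemma layer0 i : layer set0 i = set0.
Proof. by apply/setP => e; rewrite !inE. Qed.

Lemma linear_forests0 : linear_forests set0.
Proof.
split=> [i | i v | ]; rewrite ?layer0 ?sub0set //.
  by split; rewrite leqW // leqn0 cards_eq0; apply/eqP/setP => x; rewrite !inE.
rewrite /edges_of imset0 => -[[//|x c] /and3P [_ _ cc]].
by move: (next_cycle cc (mem_head x c)); rewrite inE.
Qed.

Lemma linear_forests_add F i a b : linear_forests F -> (a, b) \in G i ->
  a \notin tails (layer F i) -> b \notin heads (layer F i) ->
  (a \notin endpoints (edges_of F)) || (b \notin endpoints (edges_of F)) ->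
  linear_forests ((i, (a, b)) |: F) /\ grows_by i 1 F ((i, (a, b)) |: F).
Proof.
move=> [sG dF acF] abG aT bH fresh.
have ab : a != b by apply: contraTneq abG => ->; apply: G_loopless.
have abF : (i, (a, b)) \notin F.
  by apply: contra aT => abF; apply: (@mem_tails _ _ a b); rewrite inE.
split; last first.
  split; rewrite ?subsetUr ?cardsU1 ?abF ?layer_setU1 ?cardsU1 ?addn1 //.
    by rewrite inE abF.
  by move=> j; apply: layer_setU1_neq.
split=> [j | j | ].
- have [-> | ji] := eqVneq j i; last by rewrite layer_setU1_neq.
  by rewrite layer_setU1 subUset sub1set abG sG.
- have [-> | ji] := eqVneq j i; last by rewrite layer_setU1_neq.
  by rewrite layer_setU1; apply: deg_le1_setU1.
- rewrite /edges_of imsetU1 /=.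
  by case/orP: fresh; [apply: acyclic_setU1_source | apply: acyclic_setU1_sink].
Qed.

Lemma linear_forests_path_systems F : linear_forests F ->
  exists Q : 'I_k -> seq (seq V), [/\ forall i, path_system (G i) (Q i),
    forall i, ps_edges (Q i) = layer F i & ~ has_dcycle (\bigcup_i ps_edges (Q i))].
Proof.
move=> [sG dF acF].
have [Q coverQ] : exists Q, forall i, path_cover (layer F i) (Q i).
  apply: (@fin_all_exists _ _ (fun i P => path_cover (layer F i) P)) => i.
  have acFi : ~ has_dcycle (layer F i) by move=> /(has_dcycleS (layer_sub_edges F i)).
  by have [P cP] := linear_forest_path_cover (dF i) acFi; exists P.
have edgesQ i : ps_edges (Q i) = layer F i by case: (coverQ i).
exists Q; split=> // [i | ]; first by case: (coverQ i) => PQ _ _; apply: path_systemS PQ.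
by rewrite (eq_bigr _ (fun i _ => edgesQ i)) bigcup_layer.
Qed.

Variables (d l : nat).
Hypothesis G_deg : forall i v, outdeg (G i) v <= d /\ indeg (G i) v <= d.

Definition high_out i : {set V} := [set v | l < outdeg (G i) v].
Definition high_in i : {set V} := [set v | l < indeg (G i) v].
Definition low i : {set V * V} :=
  [set e in G i | (e.1 \notin high_out i) && (e.2 \notin high_in i)].
Definition high_count i := #|high_out i| + #|high_in i|.
Definition quota i := #|G i| %/ d.
Definition low_quota i := quota i - high_count i.

Lemma low_sub i : low i \subset G i.
Proof. by apply/subsetP => e; rewrite inE => /andP []. Qed.

Lemma outdeg_low i v : outdeg (low i) v <= l.
Proof.
have [vH | vL] := boolP (v \in high_out i).
  rewrite /outdeg (_ : [set y | _] = set0) ?cards0 //.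
  by move: vH; rewrite inE => vH; apply/setP => y; rewrite !inE vH andbF.
by apply: leq_trans (outdegS v (low_sub i)) _; move: vL; rewrite inE -leqNgt.
Qed.

Lemma indeg_low i v : indeg (low i) v <= l.
Proof.
have [vH | vL] := boolP (v \in high_in i).
  rewrite /indeg (_ : [set x | _] = set0) ?cards0 //.
  by move: vH; rewrite inE => vH; apply/setP => x; rewrite !inE vH !andbF.
by apply: leq_trans (indegS v (low_sub i)) _; move: vL; rewrite inE -leqNgt.
Qed.

Lemma card_low_touching i (S : {set V}) :
  #|[set e in low i | (e.1 \in S) || (e.2 \in S)]| <= 2 * l * #|S|.
Proof.
apply: (@leq_trans (#|[set e in low i | e.1 \in S]| + #|[set e in low i | e.2 \in S]|)).
  apply: leq_trans (subset_leq_card _) (leq_card_setU _ _).1.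
  by apply/subsetP => e; rewrite !inE => /andP [-> /orP []] ->; rewrite ?orbT.
rewrite card_out_edges card_in_edges mul2n -addnn mulnDl.
by apply: leq_add; rewrite mulnC -sum_nat_const; apply: leq_sum => v _;
  [apply: outdeg_low | apply: indeg_low].
Qed.

Lemma card_high_out i : l.+1 * #|high_out i| <= #|G i|.
Proof.
rewrite mulnC -sum_nat_const; apply: (@leq_trans (\sum_(v in high_out i) outdeg (G i) v)).
  by apply: leq_sum => v; rewrite inE.
by rewrite -card_out_edges; apply: subset_leq_card; apply/subsetP => e; rewrite inE => /andP [].
Qed.

Lemma card_high_in i : l.+1 * #|high_in i| <= #|G i|.
Proof.
rewrite mulnC -sum_nat_const; apply: (@leq_trans (\sum_(v in high_in i) indeg (G i) v)).
  by apply: leq_sum => v; rewrite inE.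
by rewrite -card_in_edges; apply: subset_leq_card; apply/subsetP => e; rewrite inE => /andP [].
Qed.

Lemma card_G_le i : #|G i| <= #|low i| + high_count i * d.
Proof.
have outs : #|[set e in G i | e.1 \in high_out i]| <= #|high_out i| * d.
  by rewrite card_out_edges -sum_nat_const; apply: leq_sum => v _; apply: (G_deg i v).1.
have ins : #|[set e in G i | e.2 \in high_in i]| <= #|high_in i| * d.
  by rewrite card_in_edges -sum_nat_const; apply: leq_sum => v _; apply: (G_deg i v).2.
apply: (@leq_trans #|low i :|: [set e in G i | e.1 \in high_out i]
                             :|: [set e in G i | e.2 \in high_in i]|).
  apply/subset_leq_card/subsetP => e eG; rewrite !inE eG /=.
  by case: (l < _); case: (l < _); rewrite ?orbT.
rewrite /high_count mulnDl addnA; apply: leq_trans (leq_card_setU _ _).1 _.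
by apply: leq_add ins; apply: leq_trans (leq_card_setU _ _).1 _; rewrite leq_add2l.
Qed.

Lemma low_quota_le i : low_quota i * d <= #|low i|.
Proof.
rewrite /low_quota mulnBl leq_subLR addnC.
by apply: leq_trans (card_G_le i); rewrite leq_divM.
Qed.

Lemma fill_low F i t : linear_forests F -> layer F i = set0 ->
  (0 < t -> 4 * l * (#|F| + t.-1) < #|low i|) ->
  exists2 F', linear_forests F' & grows_by i t F F' /\ layer F' i \subset low i.
Proof.
move=> linF layerF0; elim: t => [_ | t IHt room].
  by exists F => //; split; [apply: grows_by0 | rewrite layerF0 sub0set].
have [|F1 linF1 [gF1 lowF1]] := IHt.
  by move=> _; apply: leq_ltn_trans (room isT); rewrite leq_mul2l leq_add2l leq_pred orbT.
pose S := endpoints (edges_of F1).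
pose bad := [set e in low i | (e.1 \in S) || (e.2 \in S)].
have bad_small : #|bad| < #|low i|.
  have cS : #|S| <= 2 * (#|F| + t) by have [_ <- _ _] := gF1; apply: card_endpoints_edges_of.
  apply: leq_ltn_trans (card_low_touching i S) (leq_trans _ (room isT)); nia.
have /subsetPn [[a b] abL abB] : ~~ (low i \subset bad).
  by apply: contraTN bad_small => /subset_leq_card; rewrite -leqNgt.
move: abB; rewrite inE abL /= negb_or => /andP [aS bS].
have [linF2 g12] := linear_forests_add linF1 (subsetP (low_sub i) _ abL)
  (fresh_notin_layer i aS).1 (fresh_notin_layer i bS).2 (introT orP (or_introl aS)).
exists ((i, (a, b)) |: F1) => //; split; first by rewrite -addn1; apply: grows_by_trans g12.
by rewrite layer_setU1 subUset sub1set abL lowF1.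
Qed.

Hypothesis l_le : 4 * k.+1 * l <= d.

Lemma fill_lows (I : {set 'I_k}) : exists2 F, linear_forests F &
  [/\ #|F| = \sum_(i in I) low_quota i,
      forall i, i \in I -> layer F i \subset low i /\ #|layer F i| = low_quota i
    & forall i, i \notin I -> layer F i = set0].
Proof.
elim: {I}_.+1 {-2}I (ltnSn #|I|) => // N IHN I; rewrite ltnS => cI.
have [-> | [j0 j0I]] := set_0Vmem I.
  by exists set0; [apply: linear_forests0 | split=> [|i|i]; rewrite ?big_set0 ?cards0 ?inE ?layer0].
(* The class with the largest [low_quota] is filled last, so that the classes filled before
   it contribute at most (k - 1) q edges. *)
have [i0 /= i0I imax] := @arg_maxnP _ j0 (mem I) low_quota j0I.
have cI' : #|I :\ i0| < N by move: cI; rewrite (cardsD1 i0 I) i0I.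
have [F linF [cF sF oF]] := IHN _ cI'.
have Fi0 : layer F i0 = set0 by apply: oF; rewrite !inE eqxx.
set q := low_quota i0.
have cF_le : #|F| <= k.-1 * q.
  rewrite cF; apply: leq_trans (_ : \sum_(i in I :\ i0) q <= _).
    by apply: leq_sum => i; rewrite inE => /andP [_ /imax].
  rewrite sum_nat_const leq_mul2r; apply/orP; right.
  by move: (max_card I); rewrite card_ord (cardsD1 i0 I) i0I; lia.
have room : 0 < q -> 4 * l * (#|F| + q.-1) < #|low i0|.
  move=> q0; apply: leq_trans (low_quota_le i0).
  have dpos : 0 < d by move: q0; rewrite /q /low_quota /quota; case: (d) => //; rewrite divn0.
  have k0 : 0 < k by apply: leq_ltn_trans (ltn_ord i0).
  nia.
have [F' linF' [[_ cF' ci' o'] lowF']] := fill_low linF Fi0 room.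
exists F' => //; split.
- by rewrite cF' cF (big_setD1 i0 i0I) addnC.
- move=> i iI; have [-> | ii0] := eqVneq i i0; first by rewrite ci' Fi0 cards0.
  by rewrite o' //; apply: sF; rewrite !inE ii0.
- move=> i iNI; have ii0 : i != i0 by apply: contraNneq iNI => ->.
  by rewrite o' //; apply: oF; rewrite !inE negb_and iNI orbT.
Qed.

Lemma low_disjoint_high i (E : {set V * V}) : E \subset low i ->
  [disjoint tails E & high_out i] /\ [disjoint heads E & high_in i].
Proof.
move=> /subsetP sE; split; rewrite disjoint_subset; apply/subsetP => _ /imsetP [e /sE eL ->];
  by move: eL; rewrite !inE => /and3P [].
Qed.

Lemma attach_out F i (X : seq V) : uniq X -> {subset X <= high_out i} -> linear_forests F ->
  [disjoint tails (layer F i) & X] -> [disjoint heads (layer F i) & high_in i] ->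
  2 * (#|F| + size X) + #|high_in i| <= l ->
  exists2 F', linear_forests F' &
    grows_by i (size X) F F' /\ [disjoint heads (layer F' i) & high_in i].
Proof.
elim: X F => [|a X IHX] F /= uX XH linF TX HH room.
  by exists F => //; split; first apply: grows_by0.
case/andP: uX => aX uX; rewrite disjoint_sym disjoint_cons disjoint_sym in TX.
case/andP: TX => aT TX.
have [z azG] : exists2 z, (a, z) \in G i & z \notin endpoints (edges_of F) :|: high_in i.
  apply: fresh_out_neighbour; have := XH a (mem_head a X); rewrite inE; apply: leq_ltn_trans.
  apply: leq_trans (leq_card_setU _ _).1 _; apply: leq_trans room.
  rewrite leq_add2r; apply: leq_trans (card_endpoints_edges_of F) _.
  by rewrite leq_mul2l leq_addr orbT.
rewrite inE negb_or => /andP [zF zH].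
have [linF1 g1] := linear_forests_add linF azG aT (fresh_notin_layer i zF).2
  (introT orP (or_intror zF)).
have [||||F' linF' [g' HH']] := IHX _ uX _ linF1.
- by move=> x xX; apply: XH; rewrite inE xX orbT.
- by rewrite layer_setU1 tails_setU1 disjoint_setU1 aX.
- by rewrite layer_setU1 heads_setU1 disjoint_setU1 zH.
- by case: g1 => _ -> _ _; rewrite addn1 addSn -addnS.
by exists F' => //; split; first by rewrite -add1n; apply: grows_by_trans g'.
Qed.

Lemma attach_in F i (Y : seq V) : uniq Y -> {subset Y <= high_in i} -> linear_forests F ->
  [disjoint heads (layer F i) & Y] -> 2 * (#|F| + size Y) <= l ->
  exists2 F', linear_forests F' & grows_by i (size Y) F F'.
Proof.
elim: Y F => [|b Y IHY] F /= uY YH linF HY room; first by exists F => //; apply: grows_by0.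
case/andP: uY => bY uY; rewrite disjoint_sym disjoint_cons disjoint_sym in HY.
case/andP: HY => bH HY.
have [z zbG zF] : exists2 z, (z, b) \in G i & z \notin endpoints (edges_of F).
  apply: fresh_in_neighbour; have := YH b (mem_head b Y); rewrite inE; apply: leq_ltn_trans.
  apply: leq_trans room; apply: leq_trans (card_endpoints_edges_of F) _.
  by rewrite leq_mul2l leq_addr orbT.
have [linF1 g1] := linear_forests_add linF zbG (fresh_notin_layer i zF).1 bH
  (introT orP (or_introl zF)).
have [|||F' linF' g'] := IHY _ uY _ linF1.
- by move=> y yY; apply: YH; rewrite inE yY orbT.
- by rewrite layer_setU1 heads_setU1 disjoint_setU1 bY.
- by case: g1 => _ -> _ _; rewrite addn1 addSn -addnS.
by exists F' => //; rewrite -add1n; apply: grows_by_trans g'.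
Qed.

Lemma attach_high F i : linear_forests F ->
  [disjoint tails (layer F i) & high_out i] -> [disjoint heads (layer F i) & high_in i] ->
  2 * (#|F| + high_count i) + #|high_in i| <= l ->
  exists2 F', linear_forests F' & grows_by i (high_count i) F F'.
Proof.
move=> linF TH HH room.
have enum_sub (A : {set V}) : enum A \subset A by apply/subsetP => v; rewrite mem_enum.
have [|||F1 linF1 [g1 HH1]] := attach_out (enum_uniq (high_out i)) _ linF _ HH.
- by move=> v; rewrite mem_enum.
- exact: disjointWr (enum_sub _) TH.
- by apply: leq_trans room; rewrite -cardE leq_add2r leq_mul2l leq_add2l leq_addr orbT.
have [||F2 linF2 g2] := attach_in (enum_uniq (high_in i)) _ linF1 (disjointWr (enum_sub _) HH1).
- by move=> v; rewrite mem_enum.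
- by case: g1 => _ -> _ _; move: room; rewrite -!cardE /high_count; lia.
by exists F2 => //; rewrite /high_count !cardE; apply: grows_by_trans g2.
Qed.

Lemma attach_highs F (J : seq 'I_k) : uniq J -> linear_forests F ->
  {in J, forall i,
    [disjoint tails (layer F i) & high_out i] /\ [disjoint heads (layer F i) & high_in i]} ->
  (forall i, 2 * (#|F| + \sum_(j <- J) high_count j) + #|high_in i| <= l) ->
  exists2 F', linear_forests F' &
    F \subset F' /\ forall i, i \in J -> #|layer F i| + high_count i <= #|layer F' i|.
Proof.
elim: J F => [|i J IHJ] F /= uJ linF pre room; first by exists F.
case/andP: uJ => iJ uJ; have [TH HH] := pre i (mem_head i J).
have [|F1 linF1 [sF1 cF1 ci1 o1]] := attach_high linF TH HH.
  by apply: leq_trans (room i); rewrite big_cons leq_add2r leq_mul2l leq_add2l leq_addr orbT.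
have [||F' linF' [sF' hF']] := IHJ F1 uJ linF1.
- move=> j jJ; have ji : j != i by apply: contraNneq iJ => <-.
  by rewrite o1 //; apply: pre; rewrite inE jJ orbT.
- by move=> j; rewrite cF1 -addnA; move: (room j); rewrite big_cons.
exists F' => //; split; first exact: subset_trans sF'.
move=> j; rewrite inE => /predU1P [-> | jJ].
  by rewrite -ci1; apply/subset_leq_card/layerS.
have ji : j != i by apply: contraNneq iJ => <-.
by rewrite -(o1 j ji); apply: hF'.
Qed.

Hypothesis budget :
  2 * l.+1 * (\sum_i #|G i|) + 5 * d * (\sum_i #|G i|) <= l * l.+1 * d.

Lemma sum_budget i : 2 * \sum_j (low_quota j + high_count j) + #|high_in i| <= l.
Proof.
pose N := \sum_j #|G j|; pose A := \sum_j quota j; pose B := \sum_j high_count j.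
have AN : A <= N by apply: leq_sum => j _; apply: leq_div.
have dAN : d * A <= N.
  by rewrite /A big_distrr; apply: leq_sum => j _ /=; rewrite mulnC leq_divM.
have BN : l.+1 * B <= 2 * N.
  rewrite /B /N !big_distrr; apply: leq_sum => j _ /=.
  by rewrite mulnDr mul2n -addnn; apply: leq_add; [apply: card_high_out | apply: card_high_in].
have CN : l.+1 * #|high_in i| <= N.
  by apply: leq_trans (card_high_in i) _; rewrite /N (bigD1 i) //= leq_addr.
have sAB : \sum_j (low_quota j + high_count j) <= A + B.
  by rewrite -big_split; apply: leq_sum => j _; rewrite leq_add2r leq_subr.
apply: leq_trans (_ : 2 * (A + B) + #|high_in i| <= l).
  by rewrite leq_add2r leq_mul2l sAB orbT.
move: budget; rewrite -/N => bud.
have [d0 | dpos] := posnP d.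
  move: bud; rewrite d0 !muln0 addn0 leqn0 muln_eq0 /= => /eqP N0.
  by move: AN BN CN; rewrite N0 !leqn0 !muln_eq0 /= => /eqP-> /eqP-> /eqP->.
rewrite -(leq_pmul2l (_ : 0 < d * l.+1)) ?muln_gt0 ?dpos //.
nia.
Qed.

Theorem linear_forests_exist : exists2 F, linear_forests F & forall i, quota i <= #|layer F i|.
Proof.
have [F linF [cF sF _]] := fill_lows setT.
have [||F' linF' [_ hF']] := attach_highs (index_enum_uniq 'I_k) linF.
- by move=> i _; apply: low_disjoint_high; case: (sF i (in_setT i)).
- by move=> i; rewrite cF (eq_bigl _ _ (@in_setT _)) -big_split sum_budget.
exists F' => // i; have [_ ci] := sF i (in_setT i).
by apply: leq_trans (hF' i (mem_index_enum i)); rewrite ci /low_quota; lia.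
Qed.

End Greedy.

Lemma budget_of_sparse K N d l : 0 < K -> 4 * K * l <= d < 4 * K * l.+1 ->
  1024 * K ^ 2 * N < d.+1 ^ 2 -> 2 * l.+1 * N + 5 * d * N <= l * l.+1 * d.
Proof.
move=> K0 /andP [ld dl] sparse; have [-> | N0] := posnP N; first by rewrite !muln0.
have d32 : 32 * K <= d.
  rewrite -ltnS -(@ltn_exp2r _ _ 2) //; apply: leq_ltn_trans sparse.
  by rewrite expnMn -[X in X <= _]muln1 leq_mul2l N0 orbT.
have l1 : 0 < l by rewrite lt0n; apply: contraTneq dl => ->; rewrite muln1 -leqNgt; lia.
have small : 16 * N < l.+1 ^ 2.
  rewrite -(ltn_pmul2l (_ : 0 < 16 * K ^ 2)) ?muln_gt0 ?expn_gt0 ?K0 //.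
  apply: (@leq_ltn_trans (d ^ 2)); first by nia.
  by rewrite (_ : 16 * K ^ 2 * l.+1 ^ 2 = (4 * K * l.+1) ^ 2) ?ltn_exp2r // !expnMn.
nia.
Qed.

Section RealBounds.
Variable R : realType.
Local Open Scope ring_scope.

Lemma sparse_bound (alpha gamma : R) (K n N : nat) : 0 < alpha -> (0 < K)%N ->
  gamma <= alpha ^+ 2 / (1024 * K%:R ^+ 2) -> N%:R <= gamma * n%:R ^+ 2 ->
  (1024 * K ^ 2 * N < (Num.truncn (alpha * n%:R)).+1 ^ 2)%N.
Proof.
move=> a0 K0 gle hN; set x := alpha * n%:R.
have c0 : 0 < 1024 * K%:R ^+ 2 :> R by rewrite mulr_gt0 ?exprn_gt0 ?ltr0n.
have cN : 1024 * K%:R ^+ 2 * N%:R <= x ^+ 2.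
  apply: le_trans (ler_wpM2l (ltW c0) hN) _.
  rewrite mulrA [x ^+ 2]exprMn; apply: ler_wpM2r; first exact: exprn_ge0 (ler0n _ _).
  by rewrite mulrC -ler_pdivlMr.
have x0 : 0 <= x by rewrite mulr_ge0 ?ler0n ?ltW.
have xd := truncnS_gt x.
rewrite -(ltr_nat R) !natrX !natrM -expr2; apply: le_lt_trans cN _; nra.
Qed.

Lemma floor_div_le_divn_truncn (x : nat) (D : R) : 0 <= D -> (Num.truncn D = 0 -> x = 0)%N ->
  (Num.floor (x%:R / D) <= (x %/ Num.truncn D)%:Z)%R.
Proof.
move=> D0 x0; have [/x0 -> | dpos] := posnP (Num.truncn D); first by rewrite mul0r floor0.
have d0R : 0 < (Num.truncn D)%:R :> R by rewrite ltr0n.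
rewrite -ltzD1 (_ : _ + 1 = (x %/ Num.truncn D).+1%:Z) ?floor_lt_int; last by rewrite -addn1 PoszD.
apply: le_lt_trans (_ : x%:R / (Num.truncn D)%:R < _).
  by rewrite ler_wpM2l ?ler0n // lef_pV2 ?posrE ?truncn_le // (lt_le_trans d0R) ?truncn_le.
by rewrite ltr_pdivrMr // -natrM ltr_nat ltn_ceil.
Qed.

End RealBounds.

Theorem lemma4p3 (R : realType) (k : nat) (alpha : R) :
  (0 < alpha)%R -> (alpha < 1)%R ->
  exists gamma0 : R, (0 < gamma0)%R /\
  forall gamma : R, (0 < gamma)%R -> (gamma <= gamma0)%R ->
  forall (n : nat) (E : {set 'I_n * 'I_n}) (G : 'I_k -> {set 'I_n * 'I_n}),
    loopless E ->
    (forall i, G i \subset E) ->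
    (forall i j, i != j -> [disjoint G i & G j]) ->
    ((\sum_(i < k) #|G i|)%:R <= gamma * (n%:R) ^+ 2)%R ->
    (forall i, maxsemideg_le (G i) (alpha * n%:R)%R) ->
    exists Q : 'I_k -> seq (seq 'I_n),
      (forall i, path_system (G i) (Q i)) /\
      ~ has_dcycle (\bigcup_(i < k) ps_edges (Q i)) /\
      (forall i, (Num.floor ((#|G i|)%:R / (alpha * n%:R)) <= (#|ps_edges (Q i)|)%:Z)%R).
Proof.
move=> a0 _; exists (alpha ^+ 2 / (1024 * k.+1%:R ^+ 2))%R.
split; first by rewrite divr_gt0 ?exprn_gt0 ?mulr_gt0 ?ltr0n.
move=> gamma _ gle n E G lE sGE _ hsum hdeg.
have an0 : (0 <= alpha * n%:R)%R by rewrite mulr_ge0 ?ler0n ?ltW.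
have sparse := sparse_bound a0 (ltn0Sn k) gle hsum.
set d := Num.truncn _ in sparse; set l := d %/ (4 * k.+1).
have G_loopless i : loopless (G i) by move=> v; apply: contra (lE v); apply: (subsetP (sGE i)).
have G_deg i v : outdeg (G i) v <= d /\ indeg (G i) v <= d.
  by rewrite !truncn_ge_nat //; apply: hdeg.
have l_le : 4 * k.+1 * l <= d by rewrite mulnC leq_divM.
have lK : 4 * k.+1 * l <= d < 4 * k.+1 * l.+1 by rewrite l_le mulnC ltn_ceil.
have [F linF quotaF] :=
  linear_forests_exist G_loopless G_deg l_le (budget_of_sparse (ltn0Sn k) lK sparse).
have [Q [pathQ edgesQ acQ]] := linear_forests_path_systems linF.
exists Q; split=> //; split=> // i; rewrite edgesQ.
apply: le_trans (_ : (quota G d i)%:Z <= _)%R; last by rewrite lez_nat quotaF.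
apply: floor_div_le_divn_truncn => // d0; apply/eqP; rewrite -leqn0 -(muln0 #|'I_n|) -d0.
by apply: card_le_outdeg => v; case: (G_deg i v).
Qed.
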